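(* Let $M$ be the torus and suppose a $2,\!6$-quadrangulation of $M$ is given, i.e. a map on $M$ all of whose faces are quadrilaterals, in which every vertex has degree $4$ except for exactly two vertices, one of degree $2$ and one of degree $6$. Then the edges of this quadrangulation cannot be colored with two colors such that colors alternate around each face (equivalently, around each vertex).
   Context: A map on a closed connected surface $M$ is an embedding of a finite graph $G$ in $M$ such that every face (connected component of $M\smallsetminus G$) is an open disk. Here a graph is a one-dimensional cell complex, so loops and multiple edges are allowed. A face is a $k$-gon if its boundary walk has $k$ edges (counted with multiplicity). A quadrangulation is a map all of whose faces are quadrilaterals. The degree of a vertex counts edge-ends (a loop contributes $2$). *)

From mathcomp Require Import all_boot fingroup perm.
Set Implicit Arguments. Unset Strict Implicit. Unset Printing Implicit Defensive.

(* An oriented map on a finite set of darts T: [sigma] is the rotation at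
   vertices (vertices = sigma-orbits), [alpha] is a fixed-point-free involution
   (edges = alpha-orbits), faces are the orbits of [face_perm]. *)
Definition face_perm (T : finType) (sigma alpha : {perm T}) : T -> T :=
  fun d => sigma (alpha d).

Definition is_map (T : finType) (sigma alpha : {perm T}) : Prop :=
  (forall d, alpha (alpha d) = d) /\ (forall d, alpha d != d) /\
  (forall x y : T, connect (fun u v => (v == sigma u) || (v == alpha u)) x y).

Definition n_vertices (T : finType) (sigma alpha : {perm T}) : nat :=
  fcard sigma T.
Definition n_edges (T : finType) (sigma alpha : {perm T}) : nat :=
  fcard alpha T.
Definition n_faces (T : finType) (sigma alpha : {perm T}) : nat :=
  fcard (face_perm sigma alpha) T.

(* An oriented map is on the torus iff its Euler characteristic V - E + F is 0. *)
Definition on_torus (T : finType) (sigma alpha : {perm T}) : Prop :=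
  is_map sigma alpha /\
  n_vertices sigma alpha + n_faces sigma alpha = n_edges sigma alpha.

(* degree of the vertex containing dart d (a loop contributes 2 darts) *)
Definition degree (T : finType) (sigma : {perm T}) (d : T) : nat := fingraph.order sigma d.

Definition face_size (T : finType) (sigma alpha : {perm T}) (d : T) : nat :=
  fingraph.order (face_perm sigma alpha) d.

Definition quadrangulation (T : finType) (sigma alpha : {perm T}) : Prop :=
  forall d, face_size sigma alpha d = 4.

Definition degrees_2_6 (T : finType) (sigma : {perm T}) : Prop :=
  exists x y : T,
    [/\ degree sigma x = 2, degree sigma y = 6 &
        forall z, ~~ fconnect sigma x z -> ~~ fconnect sigma y z ->
                  degree sigma z = 4].

(* 2-colouring of edges (function on darts constant on alpha-orbits) such that
   consecutive edges along every face boundary walk get different colours *)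
Definition alternating_2_colouring (T : finType) (sigma alpha : {perm T})
  (col : T -> bool) : Prop :=
  (forall d, col (alpha d) = col d) /\
  (forall d, col (face_perm sigma alpha d) != col d).

From mathcomp Require Import all_boot fingroup perm.
Set Implicit Arguments. Unset Strict Implicit. Unset Printing Implicit Defensive.

(** Alternation of the colours around faces gives [col (sigma e) = ~~ col e],
    so the straight-ahead map [straight d = sigma (sigma (alpha d))] (cross an
    edge, then leave the vertex by the edge opposite to it) preserves colours;
    its orbits through darts of colour [true] are the straight lines of that
    colour class. Fix a length [l] and count these lines.  Passing to the
    opposite side of each quadrilateral reverses every line and pairs the lines
    off, so their number is even.  Turning around each edge ([alpha]) also
    reverses lines and pairs them off, except for the lines through the vertex
    of degree 6, where straightness fails; the line that turns back at the
    vertex of degree 2 is one of them.  Following how the three lines leaving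
    the degree-6 vertex return to it shows that, for a suitable [l], exactly one
    line of length [l] passes through that vertex, so the two counts differ by
    one: a contradiction. *)

Section InjectiveOrbits.
Variables (T : finType) (f : T -> T).
Hypothesis injf : injective f.

Lemma iter_inj n x y : iter n f x = iter n f y -> x = y.
Proof. by elim: n x y => //= n IHn x y /injf /IHn. Qed.

Lemma iter_neq_order n x : 0 < n < fingraph.order f x -> iter n f x != x.
Proof.
case/andP=> n_gt0 lt_n; apply: contraTneq n_gt0 => Exn.
by rewrite -(findex_iter lt_n) Exn findex0.
Qed.

Lemma order_le_period n x : 0 < n -> iter n f x = x -> fingraph.order f x <= n.
Proof.
move=> n_gt0 Exn; rewrite leqNgt; apply/negP => lt_n.
by have := @iter_neq_order n x; rewrite n_gt0 lt_n Exn eqxx => /(_ isT).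
Qed.

Lemma order_fconnect x y : fconnect f x y -> fingraph.order f y = fingraph.order f x.
Proof.
by move=> xy; apply: eq_card; apply: same_connect (fconnect_sym injf) _ _ _; rewrite fconnect_sym.
Qed.

Lemma iter_order_mul k x : iter (fingraph.order f x * k) f x = x.
Proof.
by elim: k => [|k IHk]; rewrite ?muln0 // mulnS iterD IHk iter_order.
Qed.

End InjectiveOrbits.

Section OrbitReflection.
Variables (T : finType) (f tau : T -> T).
Hypotheses (injf : injective f) (inj_tau : injective tau).
Variable x : T.
Hypothesis reverses : {in fconnect f x, forall y, f (tau (f y)) = tau y}.

Lemma iter_reflect t : iter t f (tau (iter t f x)) = tau x.
Proof.
by elim: t => // t IHt; rewrite iterSr iterS reverses ?inE ?fconnect_iter.
Qed.

Lemma order_reflect : fingraph.order f (tau x) = fingraph.order f x.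
Proof.
apply/eqP; rewrite eqn_leq; apply/andP; split; apply: order_le_period;
  rewrite ?fingraph.order_gt0 //.
  by have := iter_reflect (fingraph.order f x); rewrite iter_order.
apply: inj_tau; apply: (iter_inj injf (n := fingraph.order f (tau x))).
by rewrite iter_reflect iter_order.
Qed.

Lemma fconnect_reflect y : fconnect f x y -> fconnect f (tau x) (tau y).
Proof.
by move=> /iter_findex <-; rewrite fconnect_sym // -(iter_reflect (findex f x y)) fconnect_iter.
Qed.

Lemma fconnect_reflectP z :
  fconnect f (tau x) z -> exists2 y, fconnect f x y & z = tau y.
Proof.
move=> /iter_findex <-; set n := findex _ _ _.
set N := fingraph.order f x; set m := N * n - n.
have N_gt0 : 0 < N := fingraph.order_gt0 f x.
exists (iter m f x); first exact: fconnect_iter.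
rewrite -{1}(iter_reflect m) -iterD.
have xy := fconnect_iter f m x.
have ord_y : fingraph.order f (tau (iter m f x)) = N.
  by rewrite (order_fconnect injf (fconnect_reflect xy)) order_reflect.
have -> : n + m = N * n by rewrite /m addnC subnK // leq_pmull.
by rewrite -{1}ord_y iter_order_mul.
Qed.

Lemma reflect_not_fconnect :
  {in fconnect f x, forall y, tau y != y} ->
  {in fconnect f x, forall y, f y != tau y} ->
  ~~ fconnect f x (tau x).
Proof.
move=> tau_neq f_neq; apply/negP => /iter_findex; set j := findex _ _ _.
rewrite -(odd_double_half j) -addnn; set k := j./2.
have xk : iter k f x \in fconnect f x by rewrite inE fconnect_iter.
rewrite addnCA iterD -(iter_reflect k) => /(iter_inj injf).
by case: (odd j) => /= [|] Ek; [move: (f_neq _ xk) | move: (tau_neq _ xk)];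
  rewrite -Ek eqxx.
Qed.

Lemma reflect_second_fixed :
  tau x = x ->
  exists2 y, fconnect f x y & (y != x /\ tau y = y) \/ f y = tau y.
Proof.
move=> tau_x; set N := fingraph.order f x; set t := N./2.
have N_gt0 : 0 < N := fingraph.order_gt0 f x.
have tau_t : tau (iter t f x) = iter (odd N + t) f x.
  apply: (iter_inj injf (n := t)); rewrite iter_reflect // tau_x -iterD addnCA addnn.
  by rewrite odd_double_half iter_order.
exists (iter t f x); first exact: fconnect_iter.
move: tau_t; case odd_N: (odd N) => /= tau_t; [right | left] => //; split => //.
have N_eq : N = t.*2 by rewrite -{1}(odd_double_half N) odd_N.
have t_gt0 : 0 < t by rewrite -double_gt0 -N_eq.
by apply: iter_neq_order => //; rewrite -/N N_eq t_gt0 -addnn -{1}(addn0 t) ltn_add2l.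
Qed.

End OrbitReflection.

Lemma even_card_involution (T : finType) (R : {pred T}) (g : T -> T) :
  {in R, forall r, g r \in R} -> {in R, involutive g} ->
  {in R, forall r, g r != r} -> ~~ odd #|R|.
Proof.
(* Extended by the identity outside [R], [g] is a permutation whose orbits in
   [R] all have length 2. *)
move=> gR gK g_neq; pose g' r := if r \in R then g r else r.
have g'K : involutive g'.
  by move=> r; rewrite /g'; case: (boolP (r \in R)) => [Rr | /negbTE ->]; rewrite ?gR ?gK.
have inj_g' := can_inj g'K.
have order2 : R \subset fingraph.order_set g' 2.
  apply/subsetP => r Rr; rewrite inE eqn_leq order_le_period ?g'K //=.
  rewrite ltnNge; apply/negP => le1.
  have ord1 : fingraph.order g' r = 1 by apply/eqP; rewrite eqn_leq le1 fingraph.order_gt0.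
  by have := iter_order inj_g' r; rewrite ord1 /= /g' Rr; apply/eqP/g_neq.
have closedR : fclosed g' R.
  move=> r _ /eqP <-; rewrite /g'; case: ifP => // Rr; by rewrite gR.
by rewrite -(fcard_order_set inj_g' order2 closedR) oddM andbF.
Qed.

Lemma even_fcard_reflected (T : finType) (f tau : T -> T) (A : {pred T}) :
    injective f -> fclosed f A -> {in A, forall x, tau x \in A} ->
    {in A, involutive tau} -> {in A, forall x, ~~ fconnect f x (tau x)} ->
    {in A, forall x y, fconnect f x y -> fconnect f (tau x) (tau y)} ->
  ~~ odd (fcard f A).
Proof.
move=> injf clA tauA tauK tau_sep tau_conn; have symf := fconnect_sym injf.
have rootA x : (froot f x \in A) = (x \in A).
  by rewrite -(closed_connect clA (connect_root _ x)).
apply: (@even_card_involution _ _ (fun r => froot f (tau r))).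
- move=> r /andP [_ Ar]; rewrite inE /= (roots_root symf) rootA; exact: tauA.
- move=> r /andP [/eqP r_root Ar] /=; rewrite -{2}r_root; apply/(rootP symf).
  by rewrite -{2}(tauK r Ar) symf tau_conn ?tauA ?connect_root.
- move=> r /andP [_ Ar] /=; apply: contra (tau_sep r Ar) => /eqP r_eq.
  by rewrite -{1}r_eq symf connect_root.
Qed.

Lemma n_compID (T : finType) (e : rel T) (a b : {pred T}) :
  n_comp e a = n_comp e [predI a & b] + n_comp e [predD a & b].
Proof.
rewrite /n_comp_mem -(cardID b); congr (_ + _); apply: eq_card => x; rewrite !inE.
  by rewrite andbA.
by rewrite andbCA andbA.
Qed.

Section AlternatingQuadrangulation.

Variables (T : finType) (sigma alpha : {perm T}) (col : T -> bool) (x0 y0 : T).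
Local Notation phi := (face_perm sigma alpha).

Hypotheses (alphaK : involutive alpha) (alpha_neq : forall d, alpha d != d).
Hypothesis face4 : forall d, fingraph.order phi d = 4.
Hypotheses (deg_x0 : fingraph.order sigma x0 = 2) (deg_y0 : fingraph.order sigma y0 = 6).
Hypothesis deg4 : forall z, ~~ fconnect sigma x0 z -> ~~ fconnect sigma y0 z ->
  fingraph.order sigma z = 4.
Hypotheses (col_alpha : forall d, col (alpha d) = col d)
           (col_phi : forall d, col (phi d) != col d).

Let inj_sigma : injective sigma := @perm_inj _ sigma.

Definition straight d := sigma (sigma (alpha d)).
Definition face_opp d := phi (phi d).

Local Notation psi := straight.

Let inj_psi : injective psi.
Proof. by move=> d e /inj_sigma /inj_sigma /perm_inj. Qed.

Let inj_phi : injective phi.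
Proof. by move=> d e /inj_sigma /perm_inj. Qed.

Lemma col_sigma e : col (sigma e) = ~~ col e.
Proof.
by move: (col_phi (alpha e)); rewrite /face_perm alphaK col_alpha; case: (col e); case: col.
Qed.

Lemma col_iter_sigma k e : col (iter k sigma e) = odd k (+) col e.
Proof. by elim: k => //= k IHk; rewrite col_sigma IHk; case: (odd k); rewrite ?negbK. Qed.

Lemma col_straight d : col (psi d) = col d.
Proof. by rewrite /straight !col_sigma negbK col_alpha. Qed.

Lemma col_fconnect_straight d e : fconnect psi d e -> col e = col d.
Proof.
move=> de; symmetry; apply: (fconnect_invariant _ de) => z.
by rewrite /invariant inE /= col_straight eqxx.
Qed.


Lemma phi4 d : phi (phi (phi (phi d))) = d.
Proof. by have := iter_order inj_phi d; rewrite face4. Qed.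

Lemma face_oppK : involutive face_opp.
Proof. by move=> d; rewrite /face_opp phi4. Qed.

Lemma face_opp_neq d : face_opp d != d.
Proof. by apply: (@iter_neq_order _ phi 2); rewrite face4. Qed.

Lemma straightE d : psi d = phi (alpha (phi d)).
Proof. by rewrite /straight /face_perm alphaK. Qed.

Lemma straight_face_opp d : psi (face_opp (psi d)) = face_opp d.
Proof. by rewrite /face_opp !straightE phi4 alphaK. Qed.

Lemma straight_neq_face_opp d : psi d != face_opp d.
Proof. by rewrite straightE (inj_eq inj_phi) alpha_neq. Qed.

(* [p] and [q 0], [q 1], [q 2] are the darts of colour [true] at the vertices
   of degree 2 and 6; a straight walk enters the degree-6 vertex at some [a k]
   and leaves it at [q k.+1]. *)
Definition p := if col x0 then x0 else sigma x0.
Definition q k := iter k.*2 sigma (if col y0 then y0 else sigma y0).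
Definition a k := alpha (q k).

Lemma col_p : col p.
Proof. by rewrite /p; case: ifP => // /negbT; rewrite col_sigma. Qed.

Lemma col_q k : col (q k).
Proof.
rewrite /q col_iter_sigma odd_double /=; case: ifP => // /negbT.
by rewrite col_sigma.
Qed.

Lemma fconnect_x0_p : fconnect sigma x0 p.
Proof. by rewrite /p; case: ifP => _; rewrite ?fconnect1. Qed.

Lemma fconnect_y0_q k : fconnect sigma y0 (q k).
Proof.
rewrite /q; apply: connect_trans (fconnect_iter _ _ _).
by case: ifP => _; rewrite ?fconnect1.
Qed.

Lemma qS k : q k.+1 = sigma (sigma (q k)).
Proof. by rewrite /q doubleS. Qed.

Lemma q3 : q 3 = q 0.
Proof.
have := iter_order inj_sigma (q 0).
by rewrite (order_fconnect inj_sigma (fconnect_y0_q 0)) deg_y0.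
Qed.

Lemma straight_a k : psi (a k) = q k.+1.
Proof. by rewrite /straight /a alphaK qS. Qed.

Lemma straight_alpha_p : psi (alpha p) = p.
Proof.
rewrite /straight alphaK; have := iter_order inj_sigma p.
by rewrite (order_fconnect inj_sigma fconnect_x0_p) deg_x0.
Qed.

Definition inQ z := [|| z == q 0, z == q 1 | z == q 2].
Definition inA z := [|| z == a 0, z == a 1 | z == a 2].

Lemma inQ_q k : k < 3 -> inQ (q k).
Proof. by case: k => [|[|[|]]] // _; rewrite /inQ eqxx ?orbT. Qed.

Lemma inA_a k : k < 3 -> inA (a k).
Proof. by case: k => [|[|[|]]] // _; rewrite /inA eqxx ?orbT. Qed.

Lemma q_inj k k' : k < 3 -> k' < 3 -> q k = q k' -> k = k'.
Proof.
have q_neq j n : 0 < n < 3 -> q (n + j) != q j.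
  move=> n_bd; rewrite /q doubleD iterD; apply: iter_neq_order.
  by rewrite (order_fconnect inj_sigma (fconnect_y0_q j)) deg_y0; case: n n_bd => [|[|[|]]].
have q10 : q 1 != q 0 := q_neq 0 1 isT.
have q20 : q 2 != q 0 := q_neq 0 2 isT.
have q21 : q 2 != q 1 := q_neq 1 1 isT.
case: k => [|[|[|]]] //; case: k' => [|[|[|]]] // _ _ E;
  by move: q10 q20 q21; rewrite E eqxx.
Qed.

Lemma inQ_alpha z : inQ (alpha z) = inA z.
Proof. by rewrite /inQ /inA /a !(canF_eq alphaK). Qed.

Lemma inA_alpha z : inA (alpha z) = inQ z.
Proof. by rewrite -inQ_alpha (alphaK z). Qed.

Lemma inQ_straight z : inQ (psi z) = inA z.
Proof.
rewrite /inQ /inA -q3 -!straight_a !(inj_eq inj_psi).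
by rewrite orbC orbA.
Qed.

Lemma vertex_cases z :
  [\/ fconnect sigma x0 z, fconnect sigma y0 z | fingraph.order sigma z = 4].
Proof.
have [x0z|x0z] := boolP (fconnect sigma x0 z); first exact: Or31.
have [y0z|y0z] := boolP (fconnect sigma y0 z); first exact: Or32.
by apply: Or33; apply: deg4.
Qed.

Lemma inQ_at_y0 z : col z -> fconnect sigma y0 z -> inQ z.
Proof.
move=> cz y0z; have := findex_max y0z; rewrite deg_y0.
rewrite -(iter_findex y0z) in cz; rewrite -{2}(iter_findex y0z); move: (findex _ _ _) cz => k.
rewrite col_iter_sigma /inQ /q; case: (col y0) => /=;
  by case: k => [|[|[|[|[|[|k]]]]]] //= _ _; rewrite ?eqxx ?orbT.
Qed.

Lemma sigma2_fixed z : col z -> sigma (sigma z) = z -> z = p.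
Proof.
move=> cz z2; have deg_z : fingraph.order sigma z <= 2 by apply: order_le_period.
case: (vertex_cases z) => [x0z|y0z|deg_z4]; last by rewrite deg_z4 in deg_z.
  have := findex_max x0z; rewrite deg_x0.
  rewrite -(iter_findex x0z) in cz; rewrite -{2}(iter_findex x0z); move: (findex _ _ _) cz => k.
  by rewrite col_iter_sigma /p; case: (col x0); case: k => [|[|k]].
by rewrite (order_fconnect inj_sigma y0z) deg_y0 in deg_z.
Qed.

Lemma sigma4_fixed z : col z -> ~~ inQ z -> iter 4 sigma z = z.
Proof.
move=> cz notQz; have := iter_order inj_sigma z.
case: (vertex_cases z) => [x0z|y0z|-> //].
  by rewrite (order_fconnect inj_sigma x0z) deg_x0 /= => sigma2z; rewrite !sigma2z.
by rewrite inQ_at_y0 in notQz.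
Qed.

Lemma straight_alpha_straight z : col z -> ~~ inA z -> psi (alpha (psi z)) = alpha z.
Proof.
by move=> cz notAz; rewrite /straight alphaK; apply: sigma4_fixed; rewrite ?col_alpha ?inQ_alpha.
Qed.

Definition through_Q y := [|| fconnect psi y (q 0), fconnect psi y (q 1) | fconnect psi y (q 2)].

Lemma through_Q_fconnect y z : fconnect psi y z -> through_Q z = through_Q y.
Proof.
by move=> yz; rewrite /through_Q !(same_connect (fconnect_sym inj_psi) yz).
Qed.

Lemma inQ_through_Q z : inQ z -> through_Q z.
Proof. by case/or3P=> /eqP ->; rewrite /through_Q connect0 ?orbT. Qed.

Lemma notA_off_Q y : ~~ through_Q y -> ~~ inA y.
Proof.
apply: contra => Ay; rewrite -(through_Q_fconnect (fconnect1 psi y)).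
by rewrite inQ_through_Q ?inQ_straight.
Qed.

Lemma alpha_reverses_line y z :
  ~~ through_Q y -> col y -> fconnect psi y z -> psi (alpha (psi z)) = alpha z.
Proof.
move=> off_Q_y cy yz; apply: straight_alpha_straight; first by rewrite (col_fconnect_straight yz).
by apply: notA_off_Q; rewrite (through_Q_fconnect yz).
Qed.

Lemma through_QP y : through_Q y -> exists2 i, i < 3 & fconnect psi y (q i).
Proof. by case/or3P=> y_q; [exists 0 | exists 1 | exists 2]. Qed.

Lemma off_Q_alpha x : col x -> ~~ through_Q x -> ~~ through_Q (alpha x).
Proof.
move=> cx off_Q_x; have rev_x := alpha_reverses_line off_Q_x cx.
apply: contra off_Q_x => /through_QP [i i_lt3 ax_qi].
have [y xy qi_ay] := fconnect_reflectP inj_psi (@perm_inj _ alpha) rev_x ax_qi.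
rewrite -(through_Q_fconnect xy); apply: contraLR (inA_a i_lt3) => off_Q_y.
by rewrite /a qi_ay (alphaK y); apply: notA_off_Q.
Qed.

Lemma through_Q_p : through_Q p.
Proof.
apply: contraT => off_Q_p; pose tau y := psi (alpha y).
have reverses : {in fconnect psi p, forall y, psi (tau (psi y)) = tau y}.
  by move=> y py; rewrite /tau (alpha_reverses_line off_Q_p col_p py).
have [y py [[y_neq_p tau_y] | psi_tau_y]] :=
  reflect_second_fixed inj_psi reverses straight_alpha_p.
  move: tau_y; rewrite /tau /straight alphaK => /(sigma2_fixed _) y_eq_p.
  by rewrite y_eq_p ?eqxx // (col_fconnect_straight py) col_p in y_neq_p.
by have := alpha_neq y; rewrite -(inj_psi psi_tau_y) eqxx.
Qed.

Lemma col_iter_q t i : col (iter t psi (q i)).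
Proof. by rewrite (col_fconnect_straight (fconnect_iter _ _ _)) col_q. Qed.

Definition segment i h k := [/\ k < 3, iter h psi (q i) = a k &
  forall s, s < h -> ~~ inA (iter s psi (q i))].

Lemma segment_exists i : i < 3 -> exists h k, segment i h k.
Proof.
move=> i_lt3; have hit_A : exists t, inA (iter t psi (q i)).
  exists (fingraph.order psi (q i)).-1.
  by rewrite -inQ_straight -iterS orderSpred iter_order // inQ_q.
case: (ex_minnP hit_A) => h Ah h_min; exists h.
have noA s : s < h -> ~~ inA (iter s psi (q i)).
  by move=> s_lt; apply: contraTN s_lt => /h_min; rewrite -leqNgt.
by case/or3P: Ah => /eqP E; [exists 0 | exists 1 | exists 2].
Qed.

Lemma segment_noQ i h k :
  segment i h k -> forall t, 0 < t <= h -> ~~ inQ (iter t psi (q i)).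
Proof. by case=> _ _ noA [|t] //= t_le; rewrite inQ_straight noA. Qed.

Lemma segment_reflect i h k :
  segment i h k -> forall t, t <= h -> iter t psi (alpha (iter t psi (q i))) = a i.
Proof.
case=> _ _ noA; elim=> // t IHt t_lt.
rewrite iterSr iterS straight_alpha_straight ?col_iter_q ?noA //.
exact/IHt/ltnW.
Qed.

Lemma segment_sym i h k : i < 3 -> segment i h k -> segment k h i.
Proof.
move=> i_lt3 seg_ihk; have [k_lt3 E _] := seg_ihk.
have qk_a : iter h psi (q k) = a i.
  by rewrite -(segment_reflect seg_ihk (leqnn h)) E /a (alphaK (q k)).
split=> // s s_lt; set t := h - s.
have t_bd : 0 < t <= h by rewrite subn_gt0 s_lt leq_subr.
apply: contraNN (segment_noQ seg_ihk t_bd) => As.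
have : iter t psi (iter s psi (q k)) = iter t psi (alpha (iter t psi (q i))).
  by rewrite (segment_reflect seg_ihk) ?leq_subr // -iterD subnK ?qk_a // ltnW.
by move/(iter_inj inj_psi) => E_s; rewrite -inA_alpha -E_s.
Qed.

Lemma segment_uniq i h k h' k' : segment i h k -> segment i h' k' -> h = h' /\ k = k'.
Proof.
move=> [k_lt3 E noA] [k'_lt3 E' noA'].
have h_eq : h = h'.
  case: (ltngtP h h') => // lt; [move: (noA' _ lt) | move: (noA _ lt)];
    by rewrite ?E ?E' inA_a.
split=> //; subst h'; rewrite E in E'.
by apply: q_inj => //; apply: (@perm_inj _ alpha).
Qed.

Lemma segment_next i h k : segment i h k -> iter h.+1 psi (q i) = q k.+1.
Proof. by case=> _ E _; rewrite iterS E straight_a. Qed.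

Lemma segment_involution i h k h' k' :
  segment i h k -> segment k h' k' -> i < 3 -> h' = h /\ k' = i.
Proof.
by move=> s s' i_lt3; have [-> ->] := segment_uniq (segment_sym i_lt3 s) s'.
Qed.

Lemma order_gt_return i h j :
  i < 3 -> (forall t, 0 < t <= h -> ~~ inQ (iter t psi (q i))) ->
  iter h.+1 psi (q i) = q j -> q j != q i -> h.+1 < fingraph.order psi (q i).
Proof.
move=> i_lt3 noQ E neq; rewrite ltnNge leq_eqVlt negb_or ltnS.
apply/andP; split.
  by apply: contra neq => /eqP K_eq; rewrite -E -K_eq iter_order.
apply: contraL (inQ_q i_lt3) => K_le; rewrite -{1}(iter_order inj_psi (q i)).
by rewrite noQ ?fingraph.order_gt0.
Qed.

Lemma unique_length_of_two_cycle u f w h :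
  (forall t, 0 < t <= h -> ~~ inQ (iter t psi (q u))) ->
  iter h.+1 psi (q u) = q f -> q f != q u -> iter h.+1 psi (q w) = q w ->
  u < 3 -> perm_eq [:: u; f; w] (iota 0 3) -> forall i, i < 3 ->
    fingraph.order psi (q i) = fingraph.order psi (q w) -> fconnect psi (q w) (q i).
Proof.
move=> noQ E neq Ew u_lt3 cover; have ord_u := order_gt_return u_lt3 noQ E neq.
have ord_w : fingraph.order psi (q w) <= h.+1 by apply: order_le_period.
have ord_f : fingraph.order psi (q f) = fingraph.order psi (q u).
  by apply: order_fconnect; rewrite // -E fconnect_iter.
have {}ord_u : fingraph.order psi (q w) < fingraph.order psi (q u).
  exact: leq_ltn_trans ord_u.
move=> i i_lt3; have : i \in [:: u; f; w] by rewrite (perm_mem cover) mem_iota.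
rewrite !inE => /or3P [] /eqP -> ord_i //.
  by rewrite ord_i ltnn in ord_u.
by rewrite -ord_f ord_i ltnn in ord_u.
Qed.

Lemma Q_orbit_of_unique_length :
  exists2 j, j < 3 & forall i, i < 3 ->
    fingraph.order psi (q i) = fingraph.order psi (q j) -> fconnect psi (q j) (q i).
Proof.
(* [i |-> k] is an involution of {0, 1, 2}: either the identity, where all [q i]
   lie on one line, or a transposition, where one [q w] lies alone on a line
   shorter than the line through the other two. *)
have [h0 [k0 s0]] := segment_exists (isT : 0 < 3).
have [h1 [k1 s1]] := segment_exists (isT : 1 < 3).
have [h2 [k2 s2]] := segment_exists (isT : 2 < 3).
have q_neq k k' : k < 3 -> k' < 3 -> k != k' -> q k != q k'.
  by move=> k_lt3 k'_lt3; apply: contra => /eqP E; rewrite (q_inj k_lt3 k'_lt3 E).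
have n0 := segment_next s0; have n1 := segment_next s1; have n2 := segment_next s2.
have noQ0 := segment_noQ s0; have noQ1 := segment_noQ s1; have noQ2 := segment_noQ s2.
have [k0_lt3 _ _] := s0; have [k1_lt3 _ _] := s1; have [k2_lt3 _ _] := s2.
case: k0 k0_lt3 s0 n0 => [|[|[|//]]] _ s0 n0;
  case: k1 k1_lt3 s1 n1 => [|[|[|//]]] _ s1 n1;
  case: k2 k2_lt3 s2 n2 => [|[|[|//]]] _ s2 n2; rewrite ?q3 in n0 n1 n2;
  try by [case: (segment_involution s0 s1 isT) => _ /eqP
    |case: (segment_involution s0 s2 isT) => _ /eqP
    |case: (segment_involution s1 s0 isT) => _ /eqP
    |case: (segment_involution s1 s2 isT) => _ /eqP
    |case: (segment_involution s2 s0 isT) => _ /eqP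
    |case: (segment_involution s2 s1 isT) => _ /eqP].
- exists 0 => // [] [|[|[|]]] // _ _.
    by rewrite -n0 fconnect_iter.
  by rewrite -n1 -n0 -iterD fconnect_iter.
- have [h_eq _] := segment_involution s1 s2 isT; rewrite h_eq in n2.
  exists 2 => //; apply: (unique_length_of_two_cycle noQ1 n1 _ n2 isT isT).
  exact: q_neq.
- have [h_eq _] := segment_involution s0 s1 isT; rewrite h_eq in n1.
  exists 1 => //; apply: (unique_length_of_two_cycle noQ0 n0 _ n1 isT isT).
  exact: q_neq.
- have [h_eq _] := segment_involution s0 s2 isT; rewrite -h_eq in n0.
  exists 0 => //; apply: (unique_length_of_two_cycle noQ2 n2 _ n0 isT isT).
  exact: q_neq.
Qed.

Lemma col_face_opp d : col (face_opp d) = col d.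
Proof.
move: (col_phi d) (col_phi (phi d)); rewrite /face_opp.
by case: (col (phi (phi d))); case: (col (phi d)); case: (col d).
Qed.

Lemma fclosed_straight (A : {pred T}) :
  (forall x, (psi x \in A) = (x \in A)) -> fclosed psi A.
Proof. by move=> psiA x _ /eqP <-; rewrite psiA. Qed.

Definition lines l : {pred T} := [pred d | col d && (fingraph.order psi d == l)].
Definition lines_off_Q l : {pred T} :=
  [pred d | col d && (fingraph.order psi d == l) && ~~ through_Q d].

Lemma even_fcard_lines l : ~~ odd (fcard psi (lines l)).
Proof.
have reverses x : {in fconnect psi x, forall y, psi (face_opp (psi y)) = face_opp y}.
  by move=> y _; apply: straight_face_opp.
have inj_opp : injective face_opp := can_inj face_oppK.
apply: (even_fcard_reflected (tau := face_opp) inj_psi).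
- apply: fclosed_straight => x; rewrite !inE col_straight.
  by rewrite (order_fconnect inj_psi (fconnect1 psi x)).
- by move=> x; rewrite !inE col_face_opp (order_reflect inj_psi inj_opp (reverses x)).
- exact: in1W face_oppK.
- move=> x _; apply: (reflect_not_fconnect inj_psi (reverses x)) => y _.
    exact: face_opp_neq.
  exact: straight_neq_face_opp.
- by move=> x _ y; apply: (fconnect_reflect inj_psi (reverses x)).
Qed.

Lemma even_fcard_lines_off_Q l : ~~ odd (fcard psi (lines_off_Q l)).
Proof.
have reverses x : x \in lines_off_Q l ->
    {in fconnect psi x, forall y, psi (alpha (psi y)) = alpha y}.
  by case/andP=> /andP [cx _] off_Q_x y; apply: alpha_reverses_line.
have inj_alpha : injective alpha := @perm_inj _ alpha.
apply: (even_fcard_reflected (tau := alpha) inj_psi).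
- apply: fclosed_straight => x; rewrite !inE col_straight.
  have x_psix := fconnect1 psi x.
  by rewrite (order_fconnect inj_psi x_psix) (through_Q_fconnect x_psix).
- move=> x Ax; move: (Ax); rewrite !inE col_alpha.
  rewrite (order_reflect inj_psi inj_alpha (reverses x Ax)).
  by case/andP=> /andP [cx ->] off_Q_x; rewrite cx off_Q_alpha.
- exact: in1W alphaK.
- move=> x Ax; apply: (reflect_not_fconnect inj_psi (reverses x Ax)) => y xy.
    exact: alpha_neq.
  apply/eqP => psi_y; move: Ax; rewrite !inE => /andP [/andP [cx _]].
  have ay_p : alpha y = p.
    by apply: sigma2_fixed; rewrite ?col_alpha ?(col_fconnect_straight xy) // -psi_y.
  rewrite -(through_Q_fconnect xy) -(through_Q_fconnect (fconnect1 psi y)).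
  by rewrite psi_y ay_p through_Q_p.
- by move=> x Ax y; apply: (fconnect_reflect inj_psi (reverses x Ax)).
Qed.

Lemma fcard_lines_through_Q : exists l, fcard psi [predI lines l & through_Q] = 1.
Proof.
have [j j_lt3 unique_j] := Q_orbit_of_unique_length.
exists (fingraph.order psi (q j)).
rewrite -(n_comp_connect (fconnect_sym inj_psi) (q j)); apply: eq_n_comp_r => z.
rewrite !inE; apply/idP/idP => [/andP [/andP [_ /eqP ord_z] /through_QP [i i_lt3 zi]] | jz].
  apply: connect_trans (unique_j i i_lt3 _) _.
    by rewrite (order_fconnect inj_psi zi) ord_z.
  by rewrite fconnect_sym.
rewrite (col_fconnect_straight jz) col_q (order_fconnect inj_psi jz) eqxx /=.
suff through_Q_z : through_Q z by [].
by rewrite (through_Q_fconnect jz) inQ_through_Q ?inQ_q.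
Qed.

Lemma alternating_colouring_absurd : False.
Proof.
have [l one_line] := fcard_lines_through_Q.
have := even_fcard_lines l; rewrite (n_compID _ _ through_Q) one_line add1n /= negbK.
have -> : n_comp (frel psi) [predD lines l & through_Q] = fcard psi (lines_off_Q l).
  by apply: eq_n_comp_r => z; rewrite !inE andbC.
by rewrite (negbTE (even_fcard_lines_off_Q l)).
Qed.

End AlternatingQuadrangulation.

Theorem theorem5 (T : finType) (sigma alpha : {perm T}) :
  on_torus sigma alpha ->
  quadrangulation sigma alpha ->
  degrees_2_6 sigma ->
  ~ (exists col : T -> bool, alternating_2_colouring sigma alpha col).
Proof.
move=> [[alphaK [alpha_neq _]] _] face4 [x0 [y0 [deg_x0 deg_y0 deg4]]] [col [col_alpha col_phi]].
exact: (alternating_colouring_absurd alphaK alpha_neq face4 deg_x0 deg_y0 deg4 col_alpha col_phi).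
Qed.
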